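(* Let $p$ be any prime, and let $n$, $m$, $s$ and $r$ be nonnegative integers such that $n\ge m$, $s\ge 1$, $1\le r\le p^s-1$ and $r$ is not divisible by $p$. Then \[ \binom{np^s}{mp^s+r}\equiv (-1)^{r-1}\, r^{-1}\,(m+1)\binom{n}{m+1}\,p^s \pmod{p^{s+1}}, \] where $r^{-1}$ denotes any integer $r'$ with $rr'\equiv 1 \pmod p$ (the inverse of $r$ modulo $p$).
   Context: Binomial coefficients follow the convention $\binom{l}{t}=0$ if $l<t$ and $\binom{0}{0}=1$. Since the right-hand side carries the factor $p^s$, the congruence modulo $p^{s+1}$ does not depend on the choice of the integer representative of $r^{-1}$ modulo $p$. *)

From mathcomp Require Import all_boot all_algebra.

From mathcomp Require Import all_boot all_algebra.
From mathcomp Require Import zify ring.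
Import GRing.Theory Num.Theory.
Local Open Scope ring_scope.

(* Put q = p^s and K = m q + r.  Absorption gives K C(nq, K) = nq C(nq - 1, K - 1),
   and K is prime to q, so C(nq, K) = q Y with K Y = n C(nq - 1, K - 1).  Modulo p,
   K = r, and comparing coefficients in (1 + X)^(nq - 1) = (1 + X^q)^(n - 1) (1 + X)^(q - 1)
   (Frobenius) gives C(nq - 1, mq + r - 1) = (-1)^(r-1) C(n - 1, m).  Hence
   Y = r^-1 (-1)^(r-1) (m + 1) C(n, m + 1) mod p, and multiplying by q gives the
   congruence modulo p q = p^(s+1). *)

Lemma coef_XaddC1_exp (R : nzRingType) n i :
  (('X + 1) ^+ n : {poly R})`_i = 'C(n, i)%:R.
Proof.
elim: n i => [|n IHn] i; first by rewrite expr0 coef1 bin0n.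
rewrite exprSr mulrDr mulr1 coefD coefMX; case: i => [|i]; first by rewrite IHn add0r !bin0.
by rewrite /= !IHn binS natrD addrC.
Qed.

Section PrimeCharacteristic.
Variables (R : comNzRingType) (p : nat).
Hypothesis charRp : p \in [pchar R].

Lemma XaddC1_exp_pexp s : (('X + 1) ^+ (p ^ s) : {poly R}) = 'X^(p ^ s) + 1.
Proof.
have charPp : p \in [pchar {poly R}] by rewrite pchar_poly.
rewrite exprDn_pchar ?expr1n // (eq_pnat _ (pcharf_eq charPp)).
by rewrite pnatX pnat_id // (pcharf_prime charRp).
Qed.

Lemma pchar_bin_pexp s j : (0 < j < p ^ s)%N -> 'C(p ^ s, j)%:R = 0 :> R.
Proof.
move=> /andP[j_gt0 j_lt].
have := congr1 (fun P : {poly R} => P`_j) (XaddC1_exp_pexp s).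
by rewrite /= coef_XaddC1_exp coefD coefXn coefC (ltn_eqF j_lt) (gtn_eqF j_gt0) addr0.
Qed.

Lemma pchar_bin_pexp_pred s d : (d < p ^ s)%N -> 'C((p ^ s).-1, d)%:R = (-1) ^+ d :> R.
Proof.
have q_gt0 : (0 < p ^ s)%N by rewrite expn_gt0 prime_gt0 ?(pcharf_prime charRp).
elim: d => [|d IHd] d_lt; first by rewrite bin0.
have /eqP := pchar_bin_pexp s d.+1 d_lt.
rewrite -(prednK q_gt0) binS natrD IHd ?(ltn_trans _ d_lt) // addr_eq0 => /eqP ->.
by rewrite exprS mulN1r.
Qed.

Lemma pchar_bin_mul_pexp_pred s n m d : (d < p ^ s)%N ->
  'C(n.+1 * p ^ s - 1, m * p ^ s + d)%:R = 'C(n, m)%:R * (-1) ^+ d :> R.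
Proof.
move=> d_lt; set q := (p ^ s)%N in d_lt *.
have q_gt0 : (0 < q)%N by rewrite expn_gt0 prime_gt0 ?(pcharf_prime charRp).
have -> : (n.+1 * q - 1 = q * n + q.-1)%N by rewrite mulSn mulnC; lia.
rewrite -coef_XaddC1_exp exprD exprM XaddC1_exp_pexp exprD1n mulr_suml coef_sum.
under eq_bigr do rewrite mulrnAl coefMn -exprM coefXnM coef_XaddC1_exp.
rewrite -/q (eq_bigr (fun i : 'I_n.+1 => if i == m :> nat then 'C(q.-1, d)%:R *+ 'C(n, i) else 0)).
  rewrite -big_mkcond (big_ord1_eq _ (fun j => 'C(q.-1, d)%:R *+ 'C(n, j))).
  rewrite pchar_bin_pexp_pred // mulr_natl.
  by case: ltnP => // n_lt; rewrite bin_small.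
move=> i _; case: (ltngtP i m) => [i_lt|i_gt|i_eq].
- have : (i.+1 * q <= m * q)%N by rewrite leq_mul2r i_lt orbT.
  by move=> ?; rewrite bin_small ?if_same ?mul0rn //; lia.
- have : (m.+1 * q <= i * q)%N by rewrite leq_mul2r i_gt orbT.
  by move=> ?; rewrite ifT ?mul0rn //; lia.
- by rewrite i_eq mulnC ltnNge leq_addr addKn.
Qed.

End PrimeCharacteristic.

Lemma pexp_dvd_bin p s N K : prime p -> (p ^ s %| N)%N -> ~~ (p %| K)%N ->
  (p ^ s %| 'C(N, K))%N.
Proof.
move=> p_pr dvd_N; case: K => [|k]; first by rewrite dvdn0.
rewrite -prime_coprime // => /(coprimeXl s) coprime_K.
by rewrite -(Gauss_dvdr _ coprime_K) -mul_bin_diag dvdn_mulr.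
Qed.

Lemma pexp_dvd_bin_mul_pexp p s n m r : prime p -> (0 < s)%N -> ~~ (p %| r)%N ->
  (p ^ s %| 'C(n * p ^ s, m * p ^ s + r))%N.
Proof.
move=> p_pr s_gt0 ndvd_r; apply: pexp_dvd_bin => //; first exact: dvdn_mull.
by rewrite dvdn_addr // dvdn_mull // dvdn_exp.
Qed.

Lemma bin_mul_pexp_divn_Fp p s n m r : prime p -> (0 < s)%N -> (r < p ^ s)%N ->
  ~~ (p %| r)%N ->
  r%:R * ('C(n * p ^ s, m * p ^ s + r) %/ p ^ s)%:R
    = (m.+1 * 'C(n, m.+1))%:R * (-1) ^+ r.-1 :> 'F_p.
Proof.
move=> p_pr s_gt0 r_lt ndvd_r; set q := (p ^ s)%N in r_lt *.
have q_gt0 : (0 < q)%N by rewrite expn_gt0 prime_gt0.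
have r_gt0 : (0 < r)%N by case: r ndvd_r {r_lt} => //; rewrite dvdn0.
have q0 : q%:R = 0 :> 'F_p by rewrite natrX pcharf0 ?pchar_Fp // expr0n gtn_eqF.
have dvd_bin := pexp_dvd_bin_mul_pexp p s n m r p_pr s_gt0 ndvd_r.
set Y := ('C(n * q, m * q + r) %/ q)%N.
have : ((m * q + r) * Y = n * 'C(n * q - 1, m * q + r.-1))%N.
  apply/eqP; rewrite -(eqn_pmul2r q_gt0) -mulnA divnK //.
  have -> : (m * q + r = (m * q + r.-1).+1)%N by lia.
  by rewrite -mul_bin_diag mulnAC subn1.
move=> /(congr1 (fun k => k%:R : 'F_p)); rewrite natrM natrD natrM q0 mulr0 add0r => ->.
case: n {Y dvd_bin} => [|n]; first by rewrite mul0n bin0n muln0 mul0r.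
rewrite /q natrM pchar_bin_mul_pexp_pred ?pchar_Fp ?(leq_ltn_trans (leq_pred r)) //.
by rewrite mulrA -natrM mul_bin_diag.
Qed.

Theorem theorem1p1 (p n m s r : nat) (r' : int) :
  prime p -> (m <= n)%N -> (1 <= s)%N -> (1 <= r)%N -> (r <= p ^ s - 1)%N ->
  ~~ (p %| r)%N ->
  ((r%:Z * r') = 1 %[mod p%:Z])%Z ->
  (('C(n * p ^ s, m * p ^ s + r))%:Z
     = (-1) ^+ (r - 1) * r' * (m.+1)%:Z * ('C(n, m.+1))%:Z * (p ^ s)%:Z
     %[mod (p ^ s.+1)%:Z])%Z.
Proof.
move=> p_pr _ s_gt0 _ r_le ndvd_r /eqP inv_r.
have q_gt0 : (0 < p ^ s)%N by rewrite expn_gt0 prime_gt0.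
have r_lt : (r < p ^ s)%N by lia.
have dvd_bin := pexp_dvd_bin_mul_pexp p s n m r p_pr s_gt0 ndvd_r.
rewrite -(divnK dvd_bin) expnS PoszM PoszM -!mulz_modl //; congr (_ * _).
apply/eqP; rewrite eqz_mod_dvd (dvdz_pcharf (pchar_Fp p_pr)).
have inv_rFp : r'%:~R * r%:R = 1 :> 'F_p.
  move: inv_r; rewrite eqz_mod_dvd (dvdz_pcharf (pchar_Fp p_pr)) rmorphB rmorphM /=.
  by rewrite subr_eq0 mulrC => /eqP.
rewrite rmorphB subr_eq0 !rmorphM rmorphXn rmorphN1 /= -!pmulrn.
apply/eqP; rewrite -[LHS]mul1r -{1}inv_rFp -[LHS]mulrA.
rewrite bin_mul_pexp_divn_Fp // subn1 natrM.
by ring.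
Qed.
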